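(* Let $n$ be a non-zero integer, taken in canonical form. Then $n+(-n)\triangleq 1+(-1)\cong\{-1\mid 1\}$.
   Context: Games are short normal-play combinatorial games, written $G\cong\{L(G)\mid R(G)\}$, $\cong$ meaning identical literal forms. Canonical integers: $0\cong\{\ \mid\ \}$, $n\cong\{n-1\mid\ \}$ for $n>0$, $n\cong\{\ \mid n+1\}$ for $n<0$. Disjunctive sum $G+H\cong\{L(G)+H,G+L(H)\mid R(G)+H,G+R(H)\}$, negation $-G\cong\{-R(G)\mid -L(G)\}$. Equivalence modulo domination: $G\triangleq H$ means that in $G+(-H)$, for every move by either player as first player in one summand, the other player has a response in the other summand after which the responder wins. *)

From mathcomp Require Import all_boot all_order all_algebra.
From Stdlib Require List.
Set Implicit Arguments. Unset Strict Implicit. Unset Printing Implicit Defensive.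

Inductive game : Type := Game : seq game -> seq game -> game.

Definition lefts (g : game) : seq game := let: Game l _ := g in l.
Definition rights (g : game) : seq game := let: Game _ r := g in r.

Fixpoint outcome (g : game) : bool * bool :=
  let: Game l r := g in
  (has id (map (fun x => ~~ (outcome x).2) l),
   has id (map (fun x => ~~ (outcome x).1) r)).

Definition left_wins_first (g : game) : bool := (outcome g).1.
Definition right_wins_first (g : game) : bool := (outcome g).2.
(* The player who has just moved wins iff the opponent, moving first, does not. *)
Definition left_wins_second (g : game) : bool := ~~ right_wins_first g.
Definition right_wins_second (g : game) : bool := ~~ left_wins_first g.

Fixpoint neg (g : game) : game :=
  let: Game l r := g in Game (map neg r) (map neg l).

Fixpoint sum (g : game) : game -> game :=
  fix sumg (h : game) : game :=
    let: Game gl gr := g in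
    let: Game hl hr := h in
    Game (map (fun x => sum x h) gl ++ map sumg hl)
         (map (fun x => sum x h) gr ++ map sumg hr).

Fixpoint pos_game (k : nat) : game :=
  if k is k'.+1 then Game [:: pos_game k'] [::] else Game [::] [::].
Fixpoint neg_game (k : nat) : game :=
  if k is k'.+1 then Game [::] [:: neg_game k'] else Game [::] [::].
Definition int_game (z : int) : game :=
  match z with
  | Posz k => pos_game k
  | Negz k => neg_game k.+1
  end.

(* Equivalence modulo domination, G ≜ H, read off literally on G + (-H):
   every first move by either player in one summand admits a response by the
   other player in the other summand after which the responder wins (the
   opponent being next to move). *)
Definition dom_equiv (g h : game) : Prop :=
  (forall gl, List.In gl (lefts g) ->
     exists2 nhr, List.In nhr (rights (neg h)) & right_wins_second (sum gl nhr)) /\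
  (forall gr, List.In gr (rights g) ->
     exists2 nhl, List.In nhl (lefts (neg h)) & left_wins_second (sum gr nhl)) /\
  (forall nhl, List.In nhl (lefts (neg h)) ->
     exists2 gr, List.In gr (rights g) & right_wins_second (sum gr nhl)) /\
  (forall nhr, List.In nhr (rights (neg h)) ->
     exists2 gl, List.In gl (lefts g) & left_wins_second (sum gl nhr)).

(* Sums of canonical integers behave like the integers they denote: a move
   changes the value by one against the mover, and a player always has a move
   when the value favours them, so by induction such a sum of value v is won
   by Left moving first iff v > 0 and by Right moving first iff v < 0.
   In n + (-n) the only left option has value -1 and the only right option
   value 1.  Playing against -(1 + (-1)) = {-1 | 1}, every move in either
   component is answered by the move in the other one that restores the value
   0, a win for the player who has just moved. *)
From mathcomp Require Import all_boot all_order all_algebra.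
From mathcomp Require Import zify.
From Stdlib Require List.

Set Implicit Arguments.
Unset Strict Implicit.
Unset Printing Implicit Defensive.

Import GRing.Theory Num.Theory.

Lemma lefts_sum g h :
  lefts (sum g h) = map (sum^~ h) (lefts g) ++ map (sum g) (lefts h).
Proof. by case: g => ? ?; case: h. Qed.

Lemma rights_sum g h :
  rights (sum g h) = map (sum^~ h) (rights g) ++ map (sum g) (rights h).
Proof. by case: g => ? ?; case: h. Qed.

Lemma neg_pos_game k : neg (pos_game k) = neg_game k.
Proof. by elim: k => //= k ->. Qed.

Lemma neg_neg_game k : neg (neg_game k) = pos_game k.
Proof. by elim: k => //= k ->. Qed.

Lemma in_sum_map (f g : game -> game) (s t : seq game) x :
  List.In x (map f s ++ map g t) ->
  (exists2 y, List.In y s & x = f y) \/ (exists2 y, List.In y t & x = g y).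
Proof.
by case/List.in_app_iff=> /List.in_map_iff [y [<- ?]]; [left | right]; exists y.
Qed.

Lemma has_const_in (T : Type) (f : pred T) (b : bool) (s : seq T) :
  (forall x, List.In x s -> f x = b) -> (b -> s <> [::]) -> has f s = b.
Proof.
elim: s => [|x s IH] fE sN /=; first by case: b fE sN => // _ /(_ isT).
rewrite fE; last by left.
case: b sN fE IH => //= _ fE -> // y ys; exact: fE (or_intror ys).
Qed.

(* [int_sum g v m]: [g] is a sum of canonical integers of total value [v];
   [m], the sum of their absolute values, bounds the length of play. *)
Inductive int_sum : game -> int -> nat -> Prop :=
| int_sum_pos k : int_sum (pos_game k) k k
| int_sum_neg k : int_sum (neg_game k) (- k%:Z)%R k
| int_sum_add g h v w m m' :
    int_sum g v m -> int_sum h w m' -> int_sum (sum g h) (v + w)%R (m + m').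

Lemma int_sum_value g v v' m : int_sum g v m -> v = v' -> int_sum g v' m.
Proof. by move=> gv <-. Qed.

Lemma int_sum_left g v m : int_sum g v m ->
  forall x, List.In x (lefts g) -> exists2 m', m' < m & int_sum x (v - 1)%R m'.
Proof.
elim=> [[|k]|[|k]|g1 g2 v1 v2 m1 m2 gv IHg hw IHh] x //=.
- case=> [<-|[]]; exists k => //.
  by apply: int_sum_value (int_sum_pos k) _; lia.
- rewrite lefts_sum => /in_sum_map [[y /IHg [k lt_k yv] ->]|[y /IHh [k lt_k yw] ->]].
  + exists (k + m2); first lia.
    by apply: int_sum_value (int_sum_add yv hw) _; lia.
  + exists (m1 + k); first lia.
    by apply: int_sum_value (int_sum_add gv yw) _; lia.
Qed.

Lemma int_sum_right g v m : int_sum g v m ->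
  forall x, List.In x (rights g) -> exists2 m', m' < m & int_sum x (v + 1)%R m'.
Proof.
elim=> [[|k]|[|k]|g1 g2 v1 v2 m1 m2 gv IHg hw IHh] x //=.
- case=> [<-|[]]; exists k => //.
  by apply: int_sum_value (int_sum_neg k) _; lia.
- rewrite rights_sum => /in_sum_map [[y /IHg [k lt_k yv] ->]|[y /IHh [k lt_k yw] ->]].
  + exists (k + m2); first lia.
    by apply: int_sum_value (int_sum_add yv hw) _; lia.
  + exists (m1 + k); first lia.
    by apply: int_sum_value (int_sum_add gv yw) _; lia.
Qed.

Lemma int_sum_lefts_nil g v m : int_sum g v m -> lefts g = [::] -> (v <= 0)%R.
Proof.
elim=> [[|k]|[|k]|g1 g2 v1 v2 m1 m2 _ IHg _ IHh] //=; try lia.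
rewrite lefts_sum; case: (lefts g1) IHg => [/(_ erefl) ?|//].
by case: (lefts g2) IHh => [/(_ erefl) ? _|//]; lia.
Qed.

Lemma int_sum_rights_nil g v m : int_sum g v m -> rights g = [::] -> (0 <= v)%R.
Proof.
elim=> [[|k]|[|k]|g1 g2 v1 v2 m1 m2 _ IHg _ IHh] //=; try lia.
rewrite rights_sum; case: (rights g1) IHg => [/(_ erefl) ?|//].
by case: (rights g2) IHh => [/(_ erefl) ? _|//]; lia.
Qed.

Lemma int_sum_outcome g v m : int_sum g v m -> outcome g = ((0 < v)%R, (v < 0)%R).
Proof.
elim/ltn_ind: m g v => m IH [l r] v gv /=; rewrite !has_map.
congr pair; apply: has_const_in.
- move=> x /(int_sum_left gv) [m' lt_m' xv] /=.
  by rewrite (IH m' lt_m' x _ xv) /=; lia.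
- by move=> v_gt0 l0; move: (int_sum_lefts_nil gv l0); lia.
- move=> x /(int_sum_right gv) [m' lt_m' xv] /=.
  by rewrite (IH m' lt_m' x _ xv) /=; lia.
- by move=> v_lt0 r0; move: (int_sum_rights_nil gv r0); lia.
Qed.

Lemma int_sum0_second_player_wins g m :
  int_sum g 0 m -> left_wins_second g /\ right_wins_second g.
Proof.
by move=> /int_sum_outcome gE; rewrite /left_wins_second /right_wins_second
  /right_wins_first /left_wins_first gE.
Qed.

Lemma dom_equiv_one_sub_one gl gr ml mr :
  int_sum gl (-1) ml -> int_sum gr 1 mr ->
  dom_equiv (Game [:: gl] [:: gr]) (sum (int_game 1) (neg (int_game 1))).
Proof.
move=> glv grv; rewrite /dom_equiv.
have -> : neg (sum (int_game 1) (neg (int_game 1))) =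
          Game [:: neg_game 1] [:: pos_game 1] by [].
have [glLW glRW] := int_sum0_second_player_wins (int_sum_add glv (int_sum_pos 1)).
have [grLW grRW] := int_sum0_second_player_wins (int_sum_add grv (int_sum_neg 1)).
split; [|split; [|split]] => x [<-|[]].
- by exists (pos_game 1); first left.
- by exists (neg_game 1); first left.
- by exists gr; first left.
- by exists gl; first left.
Qed.

Theorem lemma3p1 (n : int) (hn : n != 0%R) :
  dom_equiv (sum (int_game n) (neg (int_game n)))
            (sum (int_game 1%R) (neg (int_game 1%R))) /\
  sum (int_game 1%R) (neg (int_game 1%R)) = Game [:: int_game (-1)%R] [:: int_game 1%R].
Proof.
split=> //.
case: n hn => [[|k]|k] // _ /=.
- rewrite neg_pos_game.
  apply: dom_equiv_one_sub_one.
  + by apply: int_sum_value (int_sum_add (int_sum_pos k) (int_sum_neg k.+1)) _; lia.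
  + by apply: int_sum_value (int_sum_add (int_sum_pos k.+1) (int_sum_neg k)) _; lia.
- rewrite neg_neg_game.
  apply: dom_equiv_one_sub_one.
  + by apply: int_sum_value (int_sum_add (int_sum_neg k.+1) (int_sum_pos k)) _; lia.
  + by apply: int_sum_value (int_sum_add (int_sum_neg k) (int_sum_pos k.+1)) _; lia.
Qed.
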